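(* Let $f: \mathbb{R}^n \to \mathbb{R}^n$ be topical and $h \in \mathbb{R}$. Then $f$ has an eigenvector with eigenvalue $h$ (i.e. $f(v) = v + h$ for some $v \in \mathbb{R}^n$) if and only if there exists $x \in \mathbb{R}^n$ such that $\|f^k(x) - kh\|_\infty$ is bounded as $k \to \infty$.
   Context: $f$ is topical if $f(x+h) = f(x)+h$ for all $h\in\mathbb{R}$ (scalar added to each coordinate) and $x\le y$ componentwise implies $f(x)\le f(y)$. $\|\cdot\|_\infty$ is the supremum norm. *)

From mathcomp Require Import all_boot all_order all_algebra.
From mathcomp Require Import reals.
Set Implicit Arguments. Unset Strict Implicit. Unset Printing Implicit Defensive.
Import Order.TTheory GRing.Theory Num.Theory.
Local Open Scope ring_scope.

Definition vec (R : realType) (n : nat) := 'I_n -> R.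

Definition vadds (R : realType) (n : nat) (x : vec R n) (h : R) : vec R n :=
  fun i => x i + h.

Definition vle (R : realType) (n : nat) (x y : vec R n) : Prop :=
  forall i, x i <= y i.

Definition topical (R : realType) (n : nat) (f : vec R n -> vec R n) : Prop :=
  (forall x h, f (vadds x h) = vadds (f x) h) /\
  (forall x y, vle x y -> vle (f x) (f y)).

Definition supnorm (R : realType) (n : nat) (x : vec R n) : R :=
  \big[Num.max/0]_(i < n) `|x i|.

From mathcomp Require Import all_boot all_order all_algebra.
From mathcomp Require Import reals boolp classical_sets filter.
From mathcomp Require Import lra.
Import Order.TTheory GRing.Theory Num.Theory.
Set Implicit Arguments.
Unset Strict Implicit.
Unset Printing Implicit Defensive.

Local Open Scope classical_set_scope.
Local Open Scope ring_scope.

(* Subtracting h turns eigenvectors with eigenvalue h into fixed points and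
   the condition on the orbit into boundedness, so it suffices to show that a
   topical map g with a bounded orbit has a fixed point.  With Y_m the
   coordinatewise infimum of the orbit tail g^k(x), k >= m, monotonicity gives
   g(Y_m) <= Y_(m+1), and nonexpansiveness in the sup norm passes this to the
   limit Z = sup_m Y_m: g(Z) <= Z.  The orbit of Z then decreases, stays
   bounded below, and its limit is a fixed point, again by nonexpansiveness. *)

Section CoordinatewiseBounds.
Variables (R : realType) (n : nat).
Implicit Types (u : nat -> vec R n) (x y : vec R n).

Lemma ler_supnorm x i : `|x i| <= supnorm x.
Proof. by rewrite /supnorm (bigD1 i) //= le_max lexx. Qed.

Definition vinf u : vec R n := fun i => inf (range (fun k => u k i)).
Definition vsup u : vec R n := fun i => sup (range (fun k => u k i)).

Lemma vinf_lb u c : (forall k i, c <= u k i) -> forall k, vle (vinf u) (u k).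
Proof. by move=> uc k i; apply: ge_inf; [exists c => _ [m _ <-]; apply: uc | exists k]. Qed.

Lemma vinf_glb u y : (forall k, vle y (u k)) -> vle y (vinf u).
Proof.
by move=> yu i; apply: lb_le_inf; [exists (u 0%N i), 0%N | move=> _ [k _ <-]; apply: yu].
Qed.

Lemma vsup_ub u c : (forall k i, u k i <= c) -> forall k, vle (u k) (vsup u).
Proof.
move=> uc k i; apply: sup_upper_bound; last by exists k.
by split; [exists (u 0%N i), 0%N | exists c => _ [m _ <-]; apply: uc].
Qed.

Lemma nonincreasing_vinf_approx u c e :
  (forall k, vle (u k.+1) (u k)) -> (forall k i, c <= u k i) -> 0 < e ->
  \forall k \near \oo, vle (u k) (vadds (vinf u) e).
Proof.
move=> u_dec uc e_gt0; apply: filter_forall => i.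
have [_ [k _ <-] uk_lt] : exists2 r, range (fun k => u k i) r & r < vinf u i + e.
  by apply: inf_adherent => //; split; [exists (u 0%N i), 0%N | exists c => _ [m _ <-]; apply: uc].
exists k => // m /= km; apply: le_trans _ (ltW uk_lt); move: km.
exact: (homo_leq (f := fun k => u k i) (r := fun a b => b <= a) (@lexx _ _)
  (fun _ _ _ ab bc => le_trans bc ab) (u_dec^~ i)).
Qed.

Lemma nondecreasing_vsup_approx u c e :
  (forall k, vle (u k) (u k.+1)) -> (forall k i, u k i <= c) -> 0 < e ->
  \forall k \near \oo, vle (vsup u) (vadds (u k) e).
Proof.
move=> u_inc uc e_gt0; apply: filter_forall => i.
have [_ [k _ <-] uk_gt] : exists2 r, range (fun k => u k i) r & vsup u i - e < r.
  by apply: sup_adherent => //; split; [exists (u 0%N i), 0%N | exists c => _ [m _ <-]; apply: uc].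
exists k => // m /= km; rewrite /vadds -lerBlDr; apply: le_trans (ltW uk_gt) _; move: km.
exact: (homo_leq (f := fun k => u k i) (r := <=%R) (@lexx _ _) le_trans (u_inc^~ i)).
Qed.

End CoordinatewiseBounds.

Section TopicalMaps.
Variables (R : realType) (n : nat) (g : vec R n -> vec R n).
Hypothesis g_topical : topical g.
Implicit Types (x y z : vec R n).

Lemma topical_le x y : vle x y -> vle (g x) (g y).
Proof. exact: g_topical.2. Qed.

Lemma topical_le_vadds x y c : vle x (vadds y c) -> vle (g x) (vadds (g y) c).
Proof. by rewrite -g_topical.1; apply: topical_le. Qed.

Lemma iter_topical_le k x y : vle x y -> vle (iter k g x) (iter k g y).
Proof. by elim: k => //= k IH /IH; apply: topical_le. Qed.

Lemma iter_topical_vadds k x c : iter k g (vadds x c) = vadds (iter k g x) c.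
Proof. by elim: k => //= k ->; rewrite g_topical.1. Qed.

Lemma topical_subfixpoint_of_bounded_orbit x B :
  (forall k i, `|iter k g x i| <= B) -> exists2 z, vle (g z) z & forall i, - B <= z i.
Proof.
move=> xB; have [xlb xub] : (forall k i, - B <= iter k g x i) /\ (forall k i, iter k g x i <= B).
  by split=> k i; have := xB k i; rewrite ler_norml => /andP[].
pose Y m := vinf (fun k => iter (m + k) g x).
have Y_le m k : vle (Y m) (iter (m + k) g x) by apply: (vinf_lb (c := - B)).
have Y_lb m : vle (fun=> - B) (Y m) by apply: vinf_glb => k i; apply: xlb.
have Y_inc m : vle (Y m) (Y m.+1) by apply: vinf_glb => k; rewrite addSnnS; apply: Y_le.
have gY m : vle (g (Y m)) (Y m.+1).
  by apply: vinf_glb => k; rewrite addSn /=; apply/topical_le/Y_le.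
have Y_ub m i : Y m i <= B by apply: le_trans (Y_le m 0%N i) (xub _ i).
pose Z := vsup Y; have YZ := vsup_ub Y_ub.
exists Z => [i|i]; last exact: le_trans (Y_lb 0%N i) (YZ 0%N i).
apply/ler_addgt0Pr => e e_gt0.
have [m ZY] := filter_ex (nondecreasing_vsup_approx Y_inc Y_ub e_gt0).
apply: le_trans (topical_le_vadds ZY i) _.
by rewrite /vadds lerD2r; apply: le_trans (gY m i) (YZ _ i).
Qed.

Lemma topical_fixpoint_of_subfixpoint z c :
  vle (g z) z -> (forall k i, c <= iter k g z i) -> exists w, g w = w.
Proof.
move=> gz zc; pose u k := iter k g z.
have u_dec k : vle (u k.+1) (u k) by elim: k => // k; apply: topical_le.
have Wu : forall k, vle (vinf u) (u k) := vinf_lb zc.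
have gW : vle (g (vinf u)) (vinf u).
  by apply: vinf_glb => k j; apply: le_trans _ (u_dec k j); apply: topical_le.
exists (vinf u); apply: funext => i; apply/eqP; rewrite eq_le gW /=.
apply/ler_addgt0Pr => e e_gt0.
have [k uW] := filter_ex (nonincreasing_vinf_approx u_dec zc e_gt0).
exact: le_trans (Wu k.+1 i) (topical_le_vadds uW i).
Qed.

Lemma topical_fixpoint_of_bounded_orbit x B :
  (forall k i, `|iter k g x i| <= B) -> exists w, g w = w.
Proof.
move=> xB; have [z gz zB] := topical_subfixpoint_of_bounded_orbit xB.
apply: (topical_fixpoint_of_subfixpoint (c := - (B + B + B)) gz) => k i.
have xz : vle (vadds x (- (B + B))) z.
  by move=> j; have := xB 0%N j; have := zB j; rewrite /vadds /= ler_norml; lra.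
have := iter_topical_le k xz i; rewrite iter_topical_vadds /vadds.
by have := xB k i; rewrite ler_norml; lra.
Qed.

End TopicalMaps.

Section Translation.
Variables (R : realType) (n : nat) (f : vec R n -> vec R n).

Lemma topical_translate h : topical f -> topical (fun x => vadds (f x) h).
Proof.
move=> [fH fle]; split=> [x c | x y /fle xy i]; last by rewrite /vadds lerD2r.
by rewrite fH; apply: funext => i; rewrite /vadds addrAC.
Qed.

Lemma eigen_fixpoint_translate v h : f v = vadds v h <-> vadds (f v) (- h) = v.
Proof.
split=> [-> | fv]; first by apply: funext => i; rewrite /vadds addrK.
by apply: funext => i; rewrite -[in RHS]fv /vadds subrK.
Qed.

Hypothesis f_vadds : forall x c, f (vadds x c) = vadds (f x) c.

Lemma iter_translate h k x :
  iter k (fun y => vadds (f y) h) x = vadds (iter k f x) (k%:R * h).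
Proof.
elim: k => [|k /= ->]; first by apply: funext => i; rewrite /vadds mul0r addr0.
by rewrite f_vadds; apply: funext => i; rewrite /vadds mulrSr mulrDl mul1r addrA.
Qed.

End Translation.

Theorem lemma3p1 (R : realType) (n : nat) (f : vec R n -> vec R n) (h : R) :
  topical f ->
  ((exists v : vec R n, f v = vadds v h) <->
   (exists x : vec R n, exists B : R, forall k : nat,
      supnorm (vadds (iter k f x) (- (k%:R * h))) <= B)).
Proof.
move=> f_top; have iter_g k x := iter_translate f_top.1 (- h) k x.
split=> [[v /eigen_fixpoint_translate fv] | [x [B xB]]].
  by exists v, (supnorm v) => k; rewrite -mulrN -iter_g iter_fix.
have [w gw] : exists w, vadds (f w) (- h) = w.
  apply: (topical_fixpoint_of_bounded_orbit (topical_translate (- h) f_top) (B := B)) => k i.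
  by rewrite iter_g mulrN; apply: le_trans (ler_supnorm _ i) (xB k).
by exists w; apply/eigen_fixpoint_translate.
Qed.
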